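(* Let $F$ be a field of characteristic zero, let $G$ be a torsion-free locally cyclic group, and let $\mathfrak{S}$ be a Schur ring over $G$. Then $\mathfrak{S}$ is either the group ring $F[G]$ or the symmetric Schur ring $F[G]^{\pm}$.
   Context: A group is locally cyclic if every finitely generated subgroup is cyclic. For finite $C\subseteq G$, $\overline{C}=\sum_{g\in C}g\in F[G]$ and $C^*=\{g^{-1}\mid g\in C\}$. A Schur ring over $G$ is an $F$-subspace $\mathfrak{S}=\operatorname{Span}_F\{\overline{C}\mid C\in\mathcal{D}(\mathfrak{S})\}$ of $F[G]$ where $\mathcal{D}(\mathfrak{S})$ is a partition of $G$ into finite sets such that (i) $\{1\}\in\mathcal{D}(\mathfrak{S})$; (ii) $C\in\mathcal{D}(\mathfrak{S})\Rightarrow C^*\in\mathcal{D}(\mathfrak{S})$; (iii) for all $C,D\in\mathcal{D}(\mathfrak{S})$, $\overline{C}\,\overline{D}=\sum_{E}\lambda_{CDE}\overline{E}$ with finitely many nonzero $\lambda_{CDE}\in F$. The group ring $F[G]$ is the Schur ring with partition into singletons; the symmetric Schur ring $F[G]^{\pm}$ is the Schur ring with partition $\{\{g,g^{-1}\}\mid g\in G\}$. *)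

From HB Require Import structures.
From mathcomp Require Import all_boot all_order all_algebra.
From mathcomp Require Import finmap.
Set Implicit Arguments. Unset Strict Implicit. Unset Printing Implicit Defensive.
Import GRing.Theory.
Local Open Scope ring_scope.
Local Open Scope fset_scope.

(* The group G is written additively (a zmodType): every locally cyclic
   group is abelian.  Elements of the group ring F[G] are represented as
   finitely supported functions G -> F. *)

Section SchurDefs.
Variables (F : fieldType) (G : zmodType).

Definition torsion_free : Prop :=
  forall (x : G) (n : nat), (0 < n)%N -> x *+ n = 0 -> x = 0.

Definition gen_subgroup (s : seq G) (x : G) : Prop :=
  exists c : seq int, size c = size s /\
    x = \sum_(i < size s) (nth 0 s i) *~ (nth 0 c i).

Definition cyclic_subgroup (g : G) (x : G) : Prop := exists k : int, x = g *~ k.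

Definition locally_cyclic : Prop :=
  forall s : seq G, exists g : G,
    forall x, gen_subgroup s x <-> cyclic_subgroup g x.

Definition sbar (C : {fset G}) : G -> F := fun x => (x \in C)%:R.

Definition sbar_mul (C D : {fset G}) : G -> F :=
  fun x => \sum_(c <- C) \sum_(d <- D) ((c + d) == x)%:R.

Definition fset_inv (C : {fset G}) : {fset G} := [fset - c | c in C].

Definition is_partition (D : {fset G} -> Prop) : Prop :=
  (forall C, D C -> C != fset0) /\
  (forall C E, D C -> D E -> (exists x, x \in C /\ x \in E) -> C = E) /\
  (forall x : G, exists C, D C /\ x \in C).

Definition span_of (D : {fset G} -> Prop) (f : G -> F) : Prop :=
  exists (Cs : seq {fset G}) (a : {fset G} -> F),
    (forall C, C \in Cs -> D C) /\
    forall x, f x = \sum_(C <- Cs) a C * sbar C x.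

Definition schur_partition (D : {fset G} -> Prop) : Prop :=
  is_partition D /\
  D [fset 0] /\
  (forall C, D C -> D (fset_inv C)) /\
  (forall C E, D C -> D E ->
     exists (Es : seq {fset G}) (lam : {fset G} -> F),
       (forall E', E' \in Es -> D E') /\
       forall x, sbar_mul C E x = \sum_(E' <- Es) lam E' * sbar E' x).

Definition schur_ring (S : (G -> F) -> Prop) : Prop :=
  exists D, schur_partition D /\ forall f, S f <-> span_of D f.

Definition singleton_partition (C : {fset G}) : Prop := exists g : G, C = [fset g].
Definition symmetric_partition (C : {fset G}) : Prop :=
  exists g : G, C = [fset g; - g].

Definition group_ring : (G -> F) -> Prop := span_of singleton_partition.
Definition sym_group_ring : (G -> F) -> Prop := span_of symmetric_partition.

End SchurDefs.

(* Since [F] has characteristic 0, the number of ways of writing [x] as [c + d] with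
   [c], [d] in two classes is constant on classes; hence so is every convolution of a
   class-constant function with a class, in particular the coefficient of [x] in any
   power of a class sum.  Local cyclicity and torsion-freeness put any finite subset
   of [G] into an infinite cyclic group, so a class [E] has a top element [t] and a
   bottom element [b] for the coordinate.  With [m + 1 = tau - beta], the coefficient
   of [t (m+1)] in [Ebar^(m+1)] is 1, so its class consists of multiples [e (m+1)]
   with [e] in [E], and only [e = t, b] occur since an interior [e] would give
   coefficient at least 2.  Pulling this class back through [(E^* )^m] shows that [E]
   is [{t, b}].  So classes have at most two elements; for a class [{x, y}] the sum
   [x + y] forms a singleton class, while a nonzero singleton class would make some
   [{t (m+1)}] with [t <> b] a class.  Hence either every class is a singleton, or
   the only singleton class is [{0}] and the others are [{x, -x}]. *)

From HB Require Import structures.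
From mathcomp Require Import all_boot all_order all_algebra.
From mathcomp Require Import finmap zify.
From Stdlib Require Import Classical.
Set Implicit Arguments. Unset Strict Implicit. Unset Printing Implicit Defensive.
Import GRing.Theory.
Local Open Scope fset_scope.
Local Open Scope ring_scope.

Lemma pchar0_natrI (F : fieldType) : [pchar F] =i pred0 ->
  injective (fun n : nat => n%:R : F).
Proof.
move=> /GRing.pcharf0P natf0 m n.
wlog le_mn : m n / (m <= n)%N => [W eq_mn|eq_mn].
  by case: (leqP m n) => [/W|/ltnW/W h]; [apply | apply/esym/h].
apply/eqP; rewrite eqn_leq le_mn /= -subn_eq0 -natf0.
by rewrite natrB // eq_mn subrr.
Qed.

Lemma locally_cyclic_coords (G : zmodType) : locally_cyclic G ->
  forall s : seq G, exists g : G, forall x, x \in s -> exists k, x = g *~ k.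
Proof.
move=> lcG s; have [g gen_g] := lcG s; exists g => x xs.
suff /gen_g [k ->] : gen_subgroup s x by exists k.
pose i0 := index x s; have i0s : (i0 < size s)%N by rewrite index_mem.
exists [seq ((i == i0) : nat)%:Z | i <- iota 0 (size s)].
rewrite size_map size_iota; split => //.
rewrite (bigD1 (Ordinal i0s)) //= (nth_map 0%N) ?size_iota // nth_iota //.
rewrite add0n eqxx mulr1z nth_index // big1 ?addr0 // => i ne_i.
rewrite (nth_map 0%N) ?size_iota // nth_iota // add0n.
suff /negbTE -> : nat_of_ord i != i0 by rewrite mulr0z.
by apply: contra ne_i => /eqP eq_i; apply/eqP/val_inj.
Qed.

Lemma coord_max (G : zmodType) (g : G) (s : seq G) : s != [::] ->
  (forall x, x \in s -> exists k, x = g *~ k) ->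
  exists t tau, [/\ t \in s, t = g *~ tau &
    forall x, x \in s -> exists2 k, x = g *~ k & k <= tau].
Proof.
elim: s => [//|a s IH] _ s_g; have [al ea] := s_g a (mem_head a s).
have s'_g x : x \in s -> exists k, x = g *~ k.
  by move=> xs; apply: s_g; rewrite inE xs orbT.
case: (eqVneq s [::]) => [->|/IH/(_ s'_g) [t [tau [ts et tmax]]]].
  by exists a, al; split; rewrite ?mem_head // => x; rewrite inE => /eqP ->; exists al.
have [le_al|lt_al] := boolP (al <= tau).
  exists t, tau; split; rewrite ?inE ?ts ?orbT // => x.
  by rewrite inE => /orP [/eqP ->|/tmax //]; exists al.
exists a, al; split; rewrite ?mem_head // => x.
rewrite inE => /orP [/eqP ->|/tmax [k -> le_k]]; first by exists al.
by exists k => //; move: le_k lt_al; lia.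
Qed.

Lemma coord_min (G : zmodType) (g : G) (s : seq G) : s != [::] ->
  (forall x, x \in s -> exists k, x = g *~ k) ->
  exists b beta, [/\ b \in s, b = g *~ beta &
    forall x, x \in s -> exists2 k, x = g *~ k & beta <= k].
Proof.
move=> sn s_g.
have s_Ng x : x \in s -> exists k, x = (- g) *~ k.
  by move=> /s_g [k ->]; exists (- k); rewrite mulNrz mulrNz opprK.
have [b [beta [bs eb bmin]]] := coord_max sn s_Ng.
exists b, (- beta); split => [//||x /bmin [k ->] le_k]; first by rewrite eb mulNrz mulrNz.
by exists (- k); [rewrite mulNrz mulrNz | lia].
Qed.

Lemma mulrz_mulrn (G : zmodType) (x : G) k n : x *~ k *+ n = x *~ (k * n%:Z).
Proof. by rewrite -mulrz_nat -mulrzA natz. Qed.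

Section TorsionFree.
Variable G : zmodType.
Hypothesis tfG : torsion_free G.

Lemma tf_mulrSnI n : injective (fun x : G => x *+ n.+1).
Proof.
move=> x y /= /eqP; rewrite -subr_eq0 -mulrnBl => /eqP /(tfG (ltn0Sn n)) /eqP.
by rewrite subr_eq0 => /eqP.
Qed.

Lemma tf_mulrzI (g : G) : g != 0 -> injective ( *~%R g).
Proof.
move=> gn a b eq_ab; apply/eqP; rewrite -subr_eq0; apply/eqP.
have gSn_neq0 k : g *+ k.+1 != 0 by apply: contra gn => /eqP /(tfG (ltn0Sn k)) ->.
have : g *~ (a - b) = 0 by rewrite mulrzBr eq_ab subrr.
case: (a - b) => [[|n]|n] // /eqP; rewrite ?NegzE ?mulrNz ?oppr_eq0.
all: by rewrite (negbTE (gSn_neq0 n)).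
Qed.

Lemma coord_extremes (g : G) (E : {fset G}) x : g != 0 -> x \in E ->
  (forall e, e \in E -> exists k, e = g *~ k) ->
  exists t b tau beta, [/\ t \in E, b \in E, t = g *~ tau, b = g *~ beta &
    forall e, e \in E -> exists2 eps, e = g *~ eps & beta <= eps <= tau].
Proof.
move=> gn xE E_g; have sn : (E : seq G) != [::].
  by apply: contraTneq xE => E0; rewrite -[x \in E]/(x \in (E : seq G)) E0.
have [t [tau [tE et tmax]]] := coord_max sn E_g.
have [b [beta [bE eb bmin]]] := coord_min sn E_g.
exists t, b, tau, beta; split => // e eE.
have [k ek le_k] := tmax e eE; have [k' ek' le_k'] := bmin e eE.
by exists k; rewrite // le_k andbT (tf_mulrzI gn (etrans (esym ek) ek')).
Qed.

End TorsionFree.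

Lemma eq_fset1 (T : choiceType) (C : {fset T}) u :
  u \in C -> {in C, forall w, w = u} -> C = [fset u].
Proof. by move=> uC C_u; apply/fsetP => w; rewrite inE; apply/idP/eqP => [/C_u|->]. Qed.

Section SchurPartition.
Variables (F : fieldType) (G : zmodType) (D : {fset G} -> Prop).
Hypotheses (charF0 : [pchar F] =i pred0) (hD : schur_partition F D).
Hypotheses (tfG : torsion_free G) (lcG : locally_cyclic G).

Lemma class_cover x : exists C, D C /\ x \in C.
Proof. by case: hD => [[_ [_ cover]] _]; apply: cover. Qed.

Lemma class_eq C C' x : D C -> D C' -> x \in C -> x \in C' -> C = C'.
Proof. by case: hD => [[_ [disj _]] _] DC DC' xC xC'; apply: disj => //; exists x. Qed.

Lemma class_nonempty C : D C -> exists x, x \in C.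
Proof. by case: hD => [[nonempty _] _] /nonempty /fset0Pn. Qed.

Lemma class0 : D [fset 0].
Proof. by case: hD => _ []. Qed.

Lemma class_inv C : D C -> D (fset_inv C).
Proof. by case: hD => _ [_ [inv _]]; apply: inv. Qed.

Definition class_fun (f : G -> nat) :=
  forall C x y, D C -> x \in C -> y \in C -> f x = f y.

Definition indicator (P : {fset G}) (x : G) : nat := x \in P.

Lemma class_fun_indicator P : D P -> class_fun (indicator P).
Proof.
move=> DP C x y DC xC yC.
have in_P z w : z \in C -> w \in C -> z \in P -> w \in P.
  by move=> zC wC zP; rewrite -(class_eq DC DP zC zP).
by rewrite /indicator (_ : x \in P = (y \in P)) //; apply/idP/idP; apply: in_P.
Qed.

Definition pair_count (K E : {fset G}) (x : G) : nat :=
  (\sum_(c <- K) \sum_(d <- E) ((c + d)%R == x))%N.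

(* These counts are the coefficients of [Kbar * Ebar], read in [F]; as [F] has
   characteristic 0 the reading is injective. *)
Lemma class_fun_pair_count K E : D K -> D E -> class_fun (pair_count K E).
Proof.
move=> DK DE C x y DC xC yC.
have [Es [lam [Es_D KE_Es]]] := hD.2.2.2 K E DK DE.
have sbar_mulE z : sbar_mul F K E z = (pair_count K E z)%:R.
  by rewrite /pair_count natr_sum; apply: eq_bigr => c _; rewrite natr_sum.
apply: (pchar0_natrI charF0); rewrite -!sbar_mulE !KE_Es.
apply: eq_big_seq => E' /Es_D DE'; congr (_ * _).
by have := class_fun_indicator DE' DC xC yC; rewrite /indicator /sbar => ->.
Qed.

Definition class_closed (A : {fset G}) :=
  forall C w, D C -> w \in C -> w \in A -> C `<=` A.

Lemma class_closed_class C : D C -> class_closed C.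
Proof. by move=> DC C' w DC' wC' wC; rewrite (class_eq DC' DC wC' wC). Qed.

Lemma class_closedU A B : class_closed A -> class_closed B -> class_closed (A `|` B).
Proof.
move=> A_cl B_cl C w DC wC; rewrite in_fsetU => /orP [wA|wB].
  exact: fsubset_trans (A_cl _ _ DC wC wA) (fsubsetUl _ _).
exact: fsubset_trans (B_cl _ _ DC wC wB) (fsubsetUr _ _).
Qed.

Lemma class_closedD A K : class_closed A -> D K -> class_closed (A `\` K).
Proof.
move=> A_cl DK C w DC wC; rewrite in_fsetD => /andP [wNK wA].
apply/fsubsetP => v vC; rewrite in_fsetD (fsubsetP (A_cl _ _ DC wC wA)) // andbT.
by apply: contra wNK => vK; rewrite -(class_eq DC DK vC vK).
Qed.

Lemma class_closed_cover (s : seq G) : exists A, class_closed A /\ {subset s <= A}.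
Proof.
elim: s => [|x s [A [A_cl sA]]].
  by exists fset0; split => // C w _ _; rewrite in_fset0.
have [C [DC xC]] := class_cover x.
exists (A `|` C); split; first exact: class_closedU A_cl (class_closed_class DC).
by move=> w; rewrite inE in_fsetU => /orP [/eqP ->|/sA ->]; rewrite ?xC ?orbT.
Qed.

Definition conv_restr (f : G -> nat) (K A : {fset G}) (z : G) : nat :=
  (\sum_(a <- A) f a * \sum_(e <- K) ((a + e)%R == z))%N.

(* On a class [C0] the restricted convolution is [f C0] times a structure constant;
   peel off one class at a time. *)
Lemma class_fun_conv_restr f K A :
  class_fun f -> D K -> class_closed A -> class_fun (conv_restr f K A).
Proof.
move=> f_cf DK; move: {2}#|`A| (leqnn #|`A|) => n; elim: n A => [|n IH] A.
  by rewrite leqn0 cardfs_eq0 => /eqP -> _ C x y; rewrite /conv_restr !big_seq_fset0.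
move=> le_A A_cl C x y DC xC yC.
have [/eqP ->|/fset0Pn [a0 a0A]] := boolP (A == fset0).
  by rewrite /conv_restr !big_seq_fset0.
have [C0 [DC0 a0C0]] := class_cover a0.
have C0_A := A_cl _ _ DC0 a0C0 a0A.
have splitA z : conv_restr f K A z = (conv_restr f K C0 z + conv_restr f K (A `\` C0) z)%N.
  rewrite /conv_restr (big_fsetID _ (mem C0)); congr (_ + _)%N; apply: eq_fbigl => v.
    by rewrite !inE /= andb_idl // => /(fsubsetP C0_A).
  by rewrite !inE andbC.
have restr_C0 z : conv_restr f K C0 z = (f a0 * pair_count C0 K z)%N.
  rewrite /conv_restr /pair_count big_distrr /=; apply: eq_big_seq => a aC0.
  by rewrite (f_cf _ _ _ DC0 aC0 a0C0).
rewrite !splitA !restr_C0 (class_fun_pair_count DC0 DK DC xC yC); congr (_ + _)%N.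
apply: IH (class_closedD A_cl DC0) _ _ _ DC xC yC.
have /fproper_ltn_card : A `\` C0 `<` A.
  rewrite fproperEneq fsubDset fsubsetUr andbT.
  by apply: contraTneq a0A => <-; rewrite in_fsetD a0C0.
by move=> lt_A; rewrite -ltnS (leq_trans lt_A).
Qed.

Definition conv (K : {fset G}) (f : G -> nat) (x : G) : nat :=
  (\sum_(e <- K) f (x - e)%R)%N.

Lemma class_fun_conv K f : D K -> class_fun f -> class_fun (conv K f).
Proof.
move=> DK f_cf C x y DC xC yC.
have [A [A_cl sA]] := class_closed_cover ([seq x - e | e <- K] ++ [seq y - e | e <- K]).
have conv_restrE z : {in K, forall e, z - e \in A} -> conv K f z = conv_restr f K A z.
  move=> zK_A; rewrite /conv /conv_restr.
  under [RHS]eq_bigr do rewrite big_distrr /=.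
  rewrite exchange_big /=; apply: eq_big_seq => e eK.
  rewrite (big_fsetD1 _ (zK_A e eK)) /= subrK eqxx muln1 big1_fset ?addn0 // => a.
  rewrite !inE => /andP [ne_a _] _; case: eqP; rewrite ?muln0 // => ae_z.
  by rewrite -ae_z addrK eqxx in ne_a.
rewrite !conv_restrE; first exact: class_fun_conv_restr f_cf DK A_cl _ _ _ DC xC yC.
  by move=> e eK; apply: sA; rewrite mem_cat (map_f (fun e => y - e)) ?orbT.
by move=> e eK; apply: sA; rewrite mem_cat (map_f (fun e => x - e)).
Qed.

Definition conv_pow (K : {fset G}) (f : G -> nat) (k : nat) : G -> nat :=
  iter k (conv K) f.

Lemma conv_powS K f k : conv_pow K f k.+1 = conv K (conv_pow K f k).
Proof. by []. Qed.

Lemma class_fun_conv_pow K f k : D K -> class_fun f -> class_fun (conv_pow K f k).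
Proof. by move=> DK f_cf; elim: k => // k; apply: class_fun_conv. Qed.

Lemma conv_pow_leS K f k x e : e \in K -> (conv_pow K f k x <= conv_pow K f k.+1 (x + e))%N.
Proof. by move=> eK; rewrite conv_powS /conv (big_fsetD1 _ eK) addrK leq_addr. Qed.

Lemma conv_pow_le_addn K f k a x e : e \in K ->
  (conv_pow K f k x <= conv_pow K f (k + a) (x + e *+ a))%N.
Proof.
move=> eK; elim: a => [|a IH]; first by rewrite addn0 mulr0n addr0.
by apply: (leq_trans IH); rewrite addnS mulrSr addrA; apply: conv_pow_leS.
Qed.

Lemma conv_pow_gt0_ind K f (R : nat -> G -> Prop) :
  (forall y, (0 < f y)%N -> R 0%N y) ->
  (forall j y e, R j y -> e \in K -> R j.+1 (y + e)) ->
  forall k x, (0 < conv_pow K f k x)%N -> R k x.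
Proof.
move=> R0 RS; elim => [|k IH] x; first exact: R0.
rewrite conv_powS /conv lt0n sum_nat_seq_neq0 => /hasP [e eK /= ne0].
by have := RS _ _ _ (IH (x - e) _) eK; rewrite subrK; apply; rewrite lt0n.
Qed.

(* [pow_count E k w] is the coefficient of [w] in [Ebar ^ k], i.e. the number of
   [k]-tuples of elements of [E] summing to [w]. *)
Definition pow_count (E : {fset G}) : nat -> G -> nat := conv_pow E (indicator [fset 0]).

Lemma class_fun_pow_count E k : D E -> class_fun (pow_count E k).
Proof. by move=> DE; apply: class_fun_conv_pow DE (class_fun_indicator class0). Qed.

Lemma pow_count_mulrn_gt0 E k e : e \in E -> (0 < pow_count E k (e *+ k))%N.
Proof.
move=> eE; have := conv_pow_le_addn (indicator [fset 0]) 0 k 0 eE.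
by rewrite add0n add0r /= /indicator inE eqxx.
Qed.

Lemma pow_count_eq1 E k w : pow_count E k.+1 w = 1%N -> exists2 e, e \in E & w = e *+ k.+1.
Proof.
elim: k w => [|k IH] w; rewrite /pow_count conv_powS /conv.
  case/sum_nat_seq_eq1 => e [eE _ w_e _]; exists e => //; move: w_e.
  by rewrite /conv_pow /= /indicator inE subr_eq0; case: eqP.
case/sum_nat_seq_eq1 => e0 [e0E _ /IH [e1 e1E w_e1] other0].
suff e10 : e1 = e0 by exists e0; rewrite // -(subrK e0 w) w_e1 e10 -mulrSr.
apply/eqP; apply: contraT => ne_e1.
have : (0 < pow_count E k.+1 (w - e1))%N.
  rewrite -[w - e1](subrK e0); apply: leq_trans (conv_pow_leS _ _ _ e0E).
  by rewrite (_ : w - e1 - e0 = e1 *+ k) ?pow_count_mulrn_gt0 // addrAC w_e1 mulrSr addrK.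
by rewrite /pow_count other0.
Qed.

Lemma pow_count1 E z : pow_count E 1 z = (z \in E).
Proof.
rewrite /pow_count conv_powS /conv -count_uniq_mem ?fset_uniq // -sum1_count [RHS]big_mkcond.
by apply: eq_bigr => e _; rewrite /conv_pow /= /indicator inE subr_eq0 eq_sym; case: eqP.
Qed.

Lemma pow_count2 E z : pow_count E 2 z = (\sum_(e <- E) ((z - e)%R \in E))%N.
Proof. by rewrite /pow_count conv_powS /conv; apply: eq_bigr => e _; apply: pow_count1. Qed.

Lemma class_singletonD a c : D [fset a] -> D [fset c] -> D [fset a + c].
Proof.
move=> Da Dc; have [C [DC acC]] := class_cover (a + c).
suff -> : [fset a + c] = C by [].
apply/esym/eq_fset1 => // w wC.
have := class_fun_conv Dc (class_fun_indicator Da) DC wC acC.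
rewrite /conv !big_seq_fset1 /indicator addrK !inE eqxx.
by case: (eqVneq (w - c) a) => // <- _; rewrite subrK.
Qed.

Lemma class_singletonN a : D [fset a] -> D [fset - a].
Proof. by move/class_inv; rewrite /fset_inv imfset_fset1. Qed.

Lemma class_singletonMn a n : D [fset a] -> D [fset a *+ n].
Proof.
move=> Da; elim: n => [|n IH]; first by rewrite mulr0n; apply: class0.
by rewrite mulrS; apply: class_singletonD.
Qed.

Lemma class_singletonMz a z : D [fset a] -> D [fset a *~ z].
Proof.
case: z => n Da; first exact: class_singletonMn.
by rewrite NegzE mulrNz; apply/class_singletonN/class_singletonMn.
Qed.

Section Extremes.
Variables (E : {fset G}) (g t b : G) (tau beta : int).
Hypotheses (DE : D E) (gn : g != 0) (tE : t \in E) (bE : b \in E).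
Hypotheses (et : t = g *~ tau) (eb : b = g *~ beta).
Hypothesis E_coord : forall e, e \in E -> exists2 eps, e = g *~ eps & beta <= eps <= tau.

Lemma pow_count_coord k w : (0 < pow_count E k w)%N ->
  exists2 kap, w = g *~ kap & k%:Z * beta <= kap <= k%:Z * tau.
Proof.
apply: (conv_pow_gt0_ind
  (R := fun j y => exists2 kap, y = g *~ kap & j%:Z * beta <= kap <= j%:Z * tau)).
  by move=> y; rewrite /indicator lt0b inE => /eqP ->; exists 0; rewrite ?mulr0z //; lia.
move=> j y e [kap -> le_kap] /E_coord [eps -> le_eps].
by exists (kap + eps); [rewrite mulrzDr | lia].
Qed.

Lemma pow_count_top k : pow_count E k (t *+ k) = 1%N.
Proof.
elim: k => [|k IH]; first by rewrite /pow_count /conv_pow /= /indicator mulr0n inE eqxx.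
rewrite /pow_count conv_powS /conv (big_fsetD1 _ tE) /= mulrSr addrK [conv_pow _ _ _ _]IH.
rewrite big1_fset // => e; rewrite !inE => /andP [ne_et eE] _.
apply/eqP; rewrite eqn0Ngt; apply/negP => /pow_count_coord [kap].
have [eps e_eps le_eps] := E_coord eE.
have ne_eps : eps != tau by apply: contraNneq ne_et => eq_eps; rewrite e_eps et eq_eps.
rewrite e_eps et mulrz_mulrn -mulrzDr -mulrzBr => /(tf_mulrzI tfG gn) eq_kap le_kap.
by move: ne_eps le_eps le_kap; rewrite -eq_kap => /eqP; lia.
Qed.

Lemma pow_count_interior m e eps : tau - beta = m.+1%:Z -> e \in E -> e = g *~ eps ->
  beta < eps < tau -> (2 <= pow_count E m.+1 (e *+ m.+1))%N.
Proof.
move=> gap eE e_eps lt_eps.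
have ne_te : t != e.
  apply: contraTneq lt_eps => eq_te; rewrite -eq_te et in e_eps.
  by rewrite (tf_mulrzI tfG gn e_eps); lia.
(* Besides [e *+ m.+1 = e + e *+ m], the gap [tau - beta = m.+1] yields a second
   decomposition [e *+ m.+1 = t + (b *+ c + t *+ a)] with [c + a = m]. *)
pose a := absz (eps - beta - 1)%R; pose c := absz (tau - eps)%R.
have mixed : e *+ m.+1 - t = b *+ c + t *+ a.
  rewrite e_eps et eb !mulrz_mulrn -mulrzBr -mulrzDr; congr (_ *~ _); lia.
have mixed_gt0 : (0 < pow_count E m (e *+ m.+1 - t))%N.
  rewrite mixed (_ : m = c + a)%N; last lia.
  exact: leq_trans (pow_count_mulrn_gt0 c bE) (conv_pow_le_addn _ _ _ _ tE).
have pure_gt0 : (0 < pow_count E m (e *+ m.+1 - e))%N.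
  by rewrite mulrSr addrK pow_count_mulrn_gt0.
rewrite /pow_count conv_powS /conv (big_fsetD1 _ eE) (big_fsetD1 t) /=; last first.
  by rewrite !inE ne_te tE.
exact: leq_add pure_gt0 (leq_trans mixed_gt0 (leq_addr _ _)).
Qed.

Lemma top_multiple_class m P : tau - beta = m.+1%:Z -> D P -> t *+ m.+1 \in P ->
  {in P, forall w, w = t *+ m.+1 \/ w = b *+ m.+1}.
Proof.
move=> gap DP tP w wP.
have w1 : pow_count E m.+1 w = 1%N.
  by rewrite (class_fun_pow_count m.+1 DE DP wP tP) pow_count_top.
have [e eE w_e] := pow_count_eq1 w1; rewrite w_e in w1 *.
have [eps e_eps le_eps] := E_coord eE.
case: (eqVneq e t) => [->|ne_et]; first by left.
case: (eqVneq e b) => [->|ne_eb]; first by right.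
have ne_tau : eps != tau by apply: contraNneq ne_et => eq_eps; rewrite e_eps et eq_eps.
have ne_beta : eps != beta by apply: contraNneq ne_eb => eq_eps; rewrite e_eps eb eq_eps.
have lt_eps : beta < eps < tau by move: ne_tau ne_beta le_eps; lia.
by have := pow_count_interior gap eE e_eps lt_eps; rewrite w1.
Qed.

(* [1_P * (E^* )^m] is constant on [E] and positive at [t = t *+ m.+1 - t *+ m]; so each
   [e] in [E] is [p] minus [m] elements of [E] with [p] in [P], and the coordinate
   bounds leave only [e = t] (for [p = t *+ m.+1]) or [e = b] (for [p = b *+ m.+1]). *)
Lemma class_elem_top_or_bot m P : D P -> t *+ m.+1 \in P ->
  {in P, forall w, w = t *+ m.+1 \/ w = b *+ m.+1} ->
  {in E, forall e, e = t \/ (e = b /\ b *+ m.+1 \in P)}.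
Proof.
move=> DP tP P_tb e eE.
pose phi := conv_pow (fset_inv E) (indicator P) m.
have phi_cf : class_fun phi := class_fun_conv_pow m (class_inv DE) (class_fun_indicator DP).
have phi_t : (0 < phi t)%N.
  have NtE : - t \in fset_inv E by apply/imfsetP; exists t.
  have := conv_pow_le_addn (indicator P) 0 m (t *+ m.+1) NtE.
  by rewrite add0n /= /indicator tP mulNrn mulrS addrK.
have phi_e : (0 < phi e)%N by rewrite (phi_cf E e t DE eE tE).
pose R j y := exists2 p, p \in P &
  exists2 k, y = p + g *~ k & - (j%:Z * tau) <= k <= - (j%:Z * beta).
have [p pP [k e_pk le_k]] : R m e.
  apply: (conv_pow_gt0_ind (R := R)) phi_e.
    move=> y; rewrite /indicator lt0b => yP; exists y => //.
    by exists 0; rewrite ?mulr0z ?addr0 //; lia.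
  move=> j y f [p pP [k -> le_k]] /imfsetP [f' /E_coord [eps -> le_eps] ->].
  by exists p => //; exists (k - eps); [rewrite mulrzBr addrA | lia].
have [eps e_eps le_eps] := E_coord eE.
have eps_k q : p = g *~ q -> eps = q + k.
  by move=> p_q; apply: (tf_mulrzI tfG gn); rewrite -e_eps e_pk p_q mulrzDr.
case: (P_tb p pP) => p_eq; [left | right; split; last by rewrite -p_eq].
  have := eps_k (tau * m.+1%:Z); rewrite p_eq et mulrz_mulrn => /(_ erefl) eq_eps.
  by rewrite e_eps; congr (_ *~ _); lia.
have := eps_k (beta * m.+1%:Z); rewrite p_eq eb mulrz_mulrn => /(_ erefl) eq_eps.
by rewrite e_eps; congr (_ *~ _); lia.
Qed.

Lemma class_elem_extreme : {in E, forall e, e = t \/ e = b}.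
Proof.
move=> e eE; have [eps e_eps le_eps] := E_coord eE.
have [eq_tb|ne_tb] := eqVneq tau beta.
  by left; rewrite e_eps et; congr (_ *~ _); move: le_eps; rewrite eq_tb; lia.
have [m gap] : exists m : nat, tau - beta = m.+1%:Z.
  by exists (absz (tau - beta - 1)%R); move: ne_tb le_eps => /eqP; lia.
have [P [DP tP]] := class_cover (t *+ m.+1).
by case: (class_elem_top_or_bot DP tP (top_multiple_class gap DP tP) eE) => [|[]];
  [left | right].
Qed.

Lemma top_multiple_not_singleton m : t != b -> ~ D [fset t *+ m.+1].
Proof.
move=> ne_tb Dt.
have P_tb : {in [fset t *+ m.+1], forall w, w = t *+ m.+1 \/ w = b *+ m.+1}.
  by move=> w; rewrite inE => /eqP ->; left.
case: (class_elem_top_or_bot Dt (fset11 _) P_tb bE) => [/esym/eqP|[_]].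
  by rewrite (negbTE ne_tb).
by rewrite inE => /eqP /(tf_mulrSnI tfG) /esym/eqP; rewrite (negbTE ne_tb).
Qed.

End Extremes.

Lemma class_two_elems E x y : D E -> x \in E -> y \in E -> x != y ->
  {in E, forall e, e = x \/ e = y}.
Proof.
move=> DE xE yE ne_xy.
have [g E_g] := locally_cyclic_coords lcG E.
have gn : g != 0.
  have [kx ex] := E_g x xE; have [ky ey] := E_g y yE.
  by apply: contraNneq ne_xy => g0; rewrite ex ey g0 !mul0rz.
have [t [b [tau [beta [tE bE et eb E_coord]]]]] := coord_extremes tfG gn xE E_g.
have ext := class_elem_extreme DE gn tE bE et eb E_coord.
move=> e /ext; case: (ext x xE) (ext y yE) ne_xy => -> [] ->; rewrite ?eqxx // => _.
by case=> ->; [right | left].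
Qed.

Lemma class_sum_two E x y : D E -> x \in E -> y \in E -> x != y -> D [fset x + y].
Proof.
move=> DE xE yE ne_xy; have E_xy := class_two_elems DE xE yE ne_xy.
have count2 z : pow_count E 2 z = (((z - x)%R \in E) + ((z - y)%R \in E))%N.
  rewrite pow_count2 (big_fsetD1 _ xE) (big_fsetD1 y) /=; last by rewrite !inE eq_sym ne_xy.
  rewrite big1_fset ?addn0 //.
  move=> e; rewrite !inE => /and3P [ne_ey ne_ex /E_xy [e_x|e_y]].
    by rewrite e_x eqxx in ne_ex.
  by rewrite e_y eqxx in ne_ey.
have [C [DC xyC]] := class_cover (x + y).
suff -> : [fset x + y] = C by [].
apply/esym/eq_fset1 => // w wC.
have := class_fun_pow_count 2 DE DC wC xyC; rewrite !count2 addrK.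
rewrite (_ : x + y - x = y) ?xE ?yE; last by rewrite addrC addKr.
case wxE : (w - x \in E); case wyE : (w - y \in E) => // _.
have [wx|wx] := E_xy _ wxE; last by apply/eqP; rewrite addrC -subr_eq wx.
have [wy|wy] := E_xy _ wyE; first by apply/eqP; rewrite -subr_eq wy.
have w2x : w = x *+ 2 by rewrite mulr2n -{1}wx subrK.
have w2y : w = y *+ 2 by rewrite mulr2n -{1}wy subrK.
by move/eqP: ne_xy; case; apply: (tf_mulrSnI tfG (n := 1)); rewrite -w2x -w2y.
Qed.

Lemma no_nonzero_singleton_class E x y h : D E -> x \in E -> y \in E -> x != y ->
  h != 0 -> ~ D [fset h].
Proof.
move=> DE xE yE ne_xy hn Dh.
have [g s_g] := locally_cyclic_coords lcG (h :: E).
have [eta h_eta] := s_g h (mem_head _ _).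
have E_g e : e \in E -> exists k, e = g *~ k.
  by move=> eE; apply: s_g; rewrite inE eE orbT.
have gn : g != 0 by apply: contraNneq hn => g0; rewrite h_eta g0 mul0rz.
have eta_n : eta != 0 by apply: contraNneq hn => eta0; rewrite h_eta eta0 mulr0z.
have [t [b [tau [beta [tE bE et eb E_coord]]]]] := coord_extremes tfG gn xE E_g.
have ne_tb : t != b.
  have ext := class_elem_extreme DE gn tE bE et eb E_coord.
  by apply: contraNneq ne_xy => eq_tb; case: (ext x xE) (ext y yE) => -> [] ->; rewrite ?eq_tb.
have Dt : D [fset t *~ eta].
  suff -> : t *~ eta = h *~ tau by apply: class_singletonMz.
  by rewrite et h_eta -!mulrzA mulrC.
have [m Dm] : exists m, D [fset t *+ m.+1].
  case: eta h_eta eta_n Dt => [[|m]|m] _ // _ Dt; first by exists m.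
  by exists m; move/class_singletonN: Dt; rewrite NegzE mulrNz opprK.
exact: (top_multiple_not_singleton DE gn tE bE et eb E_coord ne_tb Dm).
Qed.

Lemma classes_dichotomy :
  (forall C, D C -> exists g, C = [fset g]) \/
  (forall C, D C -> exists g, C = [fset g; - g]).
Proof.
have [[h [hn Dh]]|no_single] := classic (exists h, h != 0 /\ D [fset h]).
  left => C DC; have [x xC] := class_nonempty DC; exists x.
  apply: eq_fset1 => // w wC; apply/eqP; apply: contraT => ne_wx.
  by case: (no_nonzero_singleton_class DC wC xC ne_wx hn Dh).
right => C DC; have [x xC] := class_nonempty DC.
have [/hasP [y yC /= ne_yx]|/hasPn C_x] := boolP (has (predC1 x) C).
  have ne_xy : x != y by rewrite eq_sym.
  have /eqP xy0 : x + y == 0.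
    apply: contraT => xyn; case: no_single; exists (x + y); split => //.
    exact: class_sum_two DC xC yC ne_xy.
  have y_eq : y = - x by apply/eqP; rewrite -addr_eq0 addrC xy0.
  move: yC ne_xy; rewrite y_eq => NxC ne_xNx; exists x.
  apply/fsetP => v; rewrite !inE; apply/idP/orP.
    by move=> /(class_two_elems DC xC NxC ne_xNx) [] ->; [left | right].
  by case=> /eqP ->.
have C_eq : C = [fset x] by apply: eq_fset1 => // w /C_x /= /negPn /eqP.
have x0 : x = 0.
  by apply/eqP; apply: contraT => xn; case: no_single; exists x; rewrite -C_eq.
by exists 0; rewrite C_eq x0; apply/fsetP => v; rewrite !inE oppr0 orbb.
Qed.

End SchurPartition.

Lemma partition_eq (G : zmodType) (D Q : {fset G} -> Prop) : is_partition D ->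
  (forall C, D C -> Q C) ->
  (forall C C' x, Q C -> Q C' -> x \in C -> x \in C' -> C = C') ->
  (forall C, Q C -> exists x, x \in C) ->
  forall C, D C <-> Q C.
Proof.
move=> [_ [_ cover]] DQ Q_eq Q_ne C; split => [/DQ //|QC].
have [x xC] := Q_ne C QC; have [C' [DC' xC']] := cover x.
by rewrite (Q_eq C C' x QC (DQ _ DC') xC xC').
Qed.

Lemma span_of_eq (F : fieldType) (G : zmodType) (D Q : {fset G} -> Prop) :
  (forall C, D C <-> Q C) -> forall f : G -> F, span_of D f <-> span_of Q f.
Proof.
move=> DQ f; split=> [[Cs [a [Cs_D f_eq]]]|[Cs [a [Cs_Q f_eq]]]]; exists Cs, a.
  by split=> // C /Cs_D /DQ.
by split=> // C /Cs_Q /DQ.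
Qed.

Lemma singleton_partition_eq (G : zmodType) (C C' : {fset G}) x :
  singleton_partition C -> singleton_partition C' -> x \in C -> x \in C' -> C = C'.
Proof. by move=> [g ->] [g' ->]; rewrite !inE => /eqP <- /eqP <-. Qed.

Lemma symmetric_partition_eq (G : zmodType) (C C' : {fset G}) x :
  symmetric_partition C -> symmetric_partition C' -> x \in C -> x \in C' -> C = C'.
Proof.
have sym_eq (g : G) : x \in [fset g; - g] -> [fset g; - g] = [fset x; - x].
  rewrite !inE => /orP [] /eqP -> //.
  by apply/fsetP => v; rewrite !inE opprK orbC.
by move=> [g ->] [g' ->] /sym_eq -> /sym_eq ->.
Qed.

Theorem theorem4p1 (F : fieldType) (G : zmodType)
  (charF0 : [pchar F] =i pred0)
  (tfG : torsion_free G) (lcG : locally_cyclic G)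
  (S : (G -> F) -> Prop) (hS : @schur_ring F G S) :
  (forall f, S f <-> @group_ring F G f) \/ (forall f, S f <-> @sym_group_ring F G f).
Proof.
have [D [hD S_D]] := hS.
have [single|sym] := classes_dichotomy charF0 hD tfG lcG; [left | right] => f;
  rewrite S_D; apply: span_of_eq; apply: partition_eq hD.1 _ _ _.
- by move=> C /single [g ->]; exists g.
- exact: singleton_partition_eq.
- by move=> C [g ->]; exists g; apply: fset11.
- by move=> C /sym [g ->]; exists g.
- exact: symmetric_partition_eq.
- by move=> C [g ->]; exists g; apply: fset21.
Qed.
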